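(* For every sequence ${\mathbf s}$ in $\widehat{\mathcal S}$ we have $E_T({\mathbf s})=P({\mathbf s})(F_T({\mathbf s}))$. In particular ${\mathcal X}_T({\mathbf s})=P({\mathbf s})({\mathcal Y}_T({\mathbf s}))$.
   Context: $R$ irreducible reduced finite root system (positive roots $R^+$, simple roots $\Pi$, highest root $\gamma$); $\widehat X=X\oplus\mathbb Z$, $\delta=(0,-1)$, affine roots $\widehat R$. $\widehat{\mathcal W}$ generated by $s_{\alpha,n}(v,m)=(v-(\langle\alpha,v\rangle-mn)\alpha^\vee,m)$, acting contragrediently on $\widehat X$; $\widehat{\mathcal S}=\{s_{\alpha,0}:\alpha\in\Pi\}\cup\{s_{\gamma,1}\}$ with simple affine roots $\alpha$ resp. $-\gamma+\delta$. $T$: commutative unital domain, $2$ not a zero divisor, affine roots nonzero in $\widehat X\otimes T$; $S_T$ symmetric algebra of $\widehat X\otimes T$; $Q_T=S_T[2^{-1}][\alpha^{-1}:\alpha\in\widehat R]$. For ${\mathbf s}=(s_1,\dots,s_l)$: $I({\mathbf s})$ = strictly increasing tuples in $\{1,\dots,l\}$, $\operatorname{ev}(i_1,\dots,i_n)=s_{i_1}\cdots s_{i_n}$; ${\mathbf s}'=(s_1,\dots,s_{l-1})$, $I({\mathbf s})=I({\mathbf s}')\sqcup I({\mathbf s}')s_l$ ($\gamma s_l$ = $\gamma$ with $l$ appended); $\Delta(z)_\gamma=\Delta(z)_{\gamma s_l}=z_\gamma$ and $\Delta^-(z)_\gamma=z_\gamma$, $\Delta^-(z)_{\gamma s_l}=-z_\gamma$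 (maps $\bigoplus_{I({\mathbf s}')}Q_T\to\bigoplus_{I({\mathbf s})}Q_T$); every element of $\bigoplus_{I({\mathbf s})}Q_T$ is uniquely $\Delta(x)+\Delta^-(y)$; for an endomorphism $f$ of $\bigoplus_{I({\mathbf s}')}Q_T$, $\Delta^f(\Delta(x)+\Delta^-(y))=\Delta(f(x))+\Delta^-(f(y))$. $c^\lambda$ multiplies the $\sigma$-component by $\operatorname{ev}(\sigma)(\lambda)\otimes1$; $\alpha_l$ = simple affine root of $s_l$. Recursively: ${\mathcal X}_T(\emptyset)=S_T$, ${\mathcal X}_T({\mathbf s})=\Delta({\mathcal X}_T({\mathbf s}'))+c^{\alpha_l}\Delta({\mathcal X}_T({\mathbf s}'))$; ${\mathcal Y}_T(\emptyset)=S_T\subset Q_T$, ${\mathcal Y}_T({\mathbf s})=\Delta({\mathcal Y}_T({\mathbf s}'))+(c^{\alpha_l})^{-1}\Delta({\mathcal Y}_T({\mathbf s}'))$; $E_T(\emptyset)=F_T(\emptyset)=\{1\}$, $E_T({\mathbf s})=\Delta(E_T({\mathbf s}'))\cup c^{\alpha_l}\Delta(E_T({\mathbf s}'))$, $F_T({\mathbf s})=\Delta(F_T({\mathbf s}'))\cup(c^{\alpha_l})^{-1}\Delta(F_T({\mathbf s}'))$ (these are $S_T$-bases of ${\mathcal X}_T({\mathbf s})$, ${\mathcal Y}_T({\mathbf s})$); $P(\emptyset)=\operatorname{id}_{Q_T}$, $P({\mathbf s})=c^{\alpha_l}\circ\Delta^{P({\mathbf s}')}$, an endomorphism of $\bigoplus_{I({\mathbf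 s})}Q_T$. *)

From mathcomp Require Import all_boot all_algebra.
From mathcomp Require Import mpoly.
From mathcomp Require Import ring.
Set Implicit Arguments.
Unset Strict Implicit.
Unset Printing Implicit Defensive.
Import GRing.Theory.
Local Open Scope ring_scope.

(* Root data.  The lattice X is realised as Z^n = 'rV[int]_n, its dual X^v  *)
(* as 'rV[int]_n with the standard perfect pairing <x, v> = sum_i x_i v_i.  *)
(* (Every lattice of rank n with its dual is of this form.)                 *)

Definition pairing (n : nat) (x v : 'rV[int]_n) : int := (x *m v^T) 0 0.

Definition rrefl (n : nat) (cor : 'rV[int]_n -> 'rV[int]_n) (a x : 'rV[int]_n) :=
  x - pairing x (cor a) *: a.
Definition corefl (n : nat) (cor : 'rV[int]_n -> 'rV[int]_n) (a v : 'rV[int]_n) :=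
  v - pairing a v *: cor a.

Definition reduced_rs (n : nat) (R : seq 'rV[int]_n) : Prop :=
  forall a b, a \in R -> b \in R -> forall p q : int, p != 0 ->
    p *: a = q *: b -> b = a \/ b = - a.

Definition irreducible_rs (n : nat) (R : seq 'rV[int]_n) (cor : 'rV[int]_n -> 'rV[int]_n) : Prop :=
  (0 < size R)%N /\
  (forall P : pred 'rV[int]_n, (exists2 a, a \in R & P a) ->
    (exists2 b, b \in R & ~~ P b) ->
    exists a, exists b, [/\ a \in R, b \in R, P a, ~~ P b & pairing a (cor b) != 0]).

Definition root_system (n : nat) (R : seq 'rV[int]_n) (cor : 'rV[int]_n -> 'rV[int]_n) : Prop :=
  [/\ uniq R, 0 \notin R,
      forall a, a \in R -> pairing a (cor a) = 2,
      forall a b, a \in R -> b \in R -> rrefl cor a b \in R &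
      forall a b, a \in R -> b \in R -> cor (rrefl cor a b) = corefl cor a (cor b)].

Definition reduced_irreducible_root_system (n : nat) (R : seq 'rV[int]_n)
  (cor : 'rV[int]_n -> 'rV[int]_n) : Prop :=
  [/\ root_system R cor, reduced_rs R & irreducible_rs R cor].

Definition nspan (n : nat) (Pi : seq 'rV[int]_n) (v : 'rV[int]_n) : Prop :=
  exists c : 'I_(size Pi) -> nat, v = \sum_(i < size Pi) (c i)%:Z *: Pi`_i.

Definition is_base (n : nat) (R Pi : seq 'rV[int]_n) : Prop :=
  [/\ uniq Pi, {subset Pi <= R},
      (forall c : 'I_(size Pi) -> int,
          \sum_(i < size Pi) c i *: Pi`_i = 0 -> forall i, c i = 0) &
      (forall a, a \in R -> nspan Pi a \/ nspan Pi (- a))].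

Definition pos_root (n : nat) (R Pi : seq 'rV[int]_n) (a : 'rV[int]_n) : Prop :=
  a \in R /\ nspan Pi a.

Definition highest_root (n : nat) (R Pi : seq 'rV[int]_n) (gam : 'rV[int]_n) : Prop :=
  pos_root R Pi gam /\ (forall a, pos_root R Pi a -> nspan Pi (gam - a)).

(* Affine data.  X^ = X (+) Z is 'rV[int]_n * int; delta = (0, -1).        *)
(* We identify X^ with the dual of X^v (+) Z through the pairing           *)
(*   <(lam,k),(v,m)> = <lam,v> - k m                                        *)
(* (the sign is forced by delta = (0,-1) and the simple affine root        *)
(* -gamma + delta of s_{gamma,1}).  The contragredient action of the       *)
(* involution s_{a,m} on X^ is then  (see lemma affact_contragredient)     *)
(*   (lam,k) |-> (lam - <lam,a^v> a, k - m <lam,a^v>).                      *)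

Definition Xhat (n : nat) := ('rV[int]_n * int)%type.

Definition affrefl_dual (n : nat) (cor : 'rV[int]_n -> 'rV[int]_n) (a : 'rV[int]_n) (m : int)
  (v : Xhat n) : Xhat n :=
  (v.1 - (pairing a v.1 - v.2 * m) *: cor a, v.2).

Definition hpairing (n : nat) (lam v : Xhat n) : int := pairing lam.1 v.1 - lam.2 * v.2.

Definition affact (n : nat) (cor : 'rV[int]_n -> 'rV[int]_n) (a : 'rV[int]_n) (m : int)
  (lam : Xhat n) : Xhat n :=
  (lam.1 - pairing lam.1 (cor a) *: a, lam.2 - m * pairing lam.1 (cor a)).

Lemma pairingC (n : nat) (x v : 'rV[int]_n) : pairing x v = pairing v x.
Proof. by rewrite /pairing -[in LHS](trmxK (x *m v^T)) trmx_mul trmxK mxE. Qed.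

Lemma pairingDr (n : nat) (x v w : 'rV[int]_n) : pairing x (v + w) = pairing x v + pairing x w.
Proof. by rewrite /pairing linearD mulmxDr mxE. Qed.

Lemma pairingNr (n : nat) (x v : 'rV[int]_n) : pairing x (- v) = - pairing x v.
Proof. by rewrite /pairing linearN mulmxN mxE. Qed.

Lemma pairingZr (n : nat) (x v : 'rV[int]_n) (c : int) : pairing x (c *: v) = c * pairing x v.
Proof. by rewrite /pairing linearZ /= -scalemxAr mxE. Qed.

Lemma pairingDl (n : nat) (x y v : 'rV[int]_n) : pairing (x + y) v = pairing x v + pairing y v.
Proof. by rewrite pairingC pairingDr -!(pairingC v). Qed.
Lemma pairingNl (n : nat) (x v : 'rV[int]_n) : pairing (- x) v = - pairing x v.
Proof. by rewrite pairingC pairingNr pairingC. Qed.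
Lemma pairingZl (n : nat) (x v : 'rV[int]_n) (c : int) : pairing (c *: x) v = c * pairing x v.
Proof. by rewrite pairingC pairingZr pairingC. Qed.

(* sanity check: affact is the contragredient of affrefl_dual, i.e.
   <s.lam, v> = <lam, s^-1 . v> = <lam, s . v>  (s is an involution) *)
Lemma affact_contragredient (n : nat) (cor : 'rV[int]_n -> 'rV[int]_n) a m (lam v : Xhat n) :
  hpairing (affact cor a m lam) v = hpairing lam (affrefl_dual cor a m v).
Proof.
rewrite /hpairing /affact /affrefl_dual /=.
rewrite pairingDl pairingNl pairingZl pairingDr pairingNr pairingZr.
ring.
Qed.

(* labels of the simple affine reflections:                                 *)
(*   Some i  <->  s_{Pi_i, 0}   (simple affine root (Pi_i, 0))             *)
(*   None    <->  s_{gamma, 1}  (simple affine root -gamma + delta)        *)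
Definition slabel (n : nat) (Pi : seq 'rV[int]_n) := option 'I_(size Pi).

Section Affine.
Variables (n : nat) (cor : 'rV[int]_n -> 'rV[int]_n) (Pi : seq 'rV[int]_n) (gam : 'rV[int]_n).

Definition lab_act (u : slabel Pi) : Xhat n -> Xhat n :=
  match u with Some i => affact cor Pi`_i 0 | None => affact cor gam 1 end.

Definition lab_root (u : slabel Pi) : Xhat n :=
  match u with Some i => (Pi`_i, 0) | None => (- gam, -1) end.

End Affine.

(* Coefficients.  X^ (x) T = T^(n+1) (coordinates of X = Z^n, then the Z   *)
(* coordinate); S_T = Sym(X^ (x) T) = T[x_0, ..., x_n]; Q_T is realised   *)
(* inside the fraction field of S_T (Q_T = S_T[1/2][1/alpha] is the        *)
(* subring generated by S_T, 1/2 and the inverses of the affine roots; all *)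
(* objects below take values in Q_T).                        *)

Definition tens (T : idomainType) (n : nat) (lam : Xhat n) : 'rV[T]_(n + 1) :=
  row_mx (map_mx (fun z : int => z%:~R) lam.1) (lam.2%:~R)%:M.

Definition ST (T : idomainType) (n : nat) := {mpoly T[n + 1]}.
Definition QT (T : idomainType) (n : nat) := {fraction ST T n}.

Definition sym1 (T : idomainType) (n : nat) (w : 'rV[T]_(n + 1)) : ST T n :=
  \sum_(i < n + 1) w 0 i *: 'X_i.

Definition embQ (T : idomainType) (n : nat) (lam : Xhat n) : QT T n :=
  tofrac (sym1 (tens T lam)).

Section Hecke.
Variables (n : nat) (cor : 'rV[int]_n -> 'rV[int]_n) (Pi : seq 'rV[int]_n) (gam : 'rV[int]_n).
Variable T : idomainType.
(* the fixed sequence s = (s_1, ..., s_L) of simple affine reflections; the *)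
(* stage l (l <= size s) objects refer to the prefix (s_1, ..., s_l).       *)
Variable s : seq (slabel Pi).

Local Notation K := (QT T n).

(* I((s_1..s_l)) = strictly increasing tuples in {1..l} = subsets of 'I_l *)
(* (position i : 'I_l stands for index i+1), ordered increasingly.         *)
Definition vecs (l : nat) := {ffun {set 'I_l} -> K}.

Definition ev (l : nat) (sigma : {set 'I_l}) (lam : Xhat n) : Xhat n :=
  foldr (fun i : 'I_l => lab_act cor gam (nth None s i)) lam (enum sigma).

Definition cmul (l : nat) (lam : Xhat n) (v : vecs l) : vecs l :=
  [ffun sigma : {set 'I_l} => embQ T (ev sigma lam) * v sigma].

Definition cmulinv (l : nat) (lam : Xhat n) (v : vecs l) : vecs l :=
  [ffun sigma : {set 'I_l} => (embQ T (ev sigma lam))^-1 * v sigma].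

Definition restr (l : nat) (sigma : {set 'I_l.+1}) : {set 'I_l} :=
  [set i : 'I_l | widen_ord (leqnSn l) i \in sigma].

Definition wid (l : nat) (sigma : {set 'I_l}) : {set 'I_l.+1} :=
  widen_ord (leqnSn l) @: sigma.

Definition Delta (l : nat) (z : vecs l) : vecs l.+1 :=
  [ffun sigma : {set 'I_l.+1} => z (restr sigma)].

Definition DeltaM (l : nat) (z : vecs l) : vecs l.+1 :=
  [ffun sigma : {set 'I_l.+1} => if ord_max \in sigma then - z (restr sigma) else z (restr sigma)].

(* Delta^f (Delta x + Delta^- y) = Delta (f x) + Delta^- (f y); the unique *)
(* decomposition w = Delta x + Delta^- y is x_g = (w_g + w_{g s_l})/2,     *)
(* y_g = (w_g - w_{g s_l})/2.                                              *)
Definition decomp1 (l : nat) (w : vecs l.+1) : vecs l :=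
  [ffun sigma : {set 'I_l} => (w (wid sigma) + w (ord_max |: wid sigma)) / 2%:R].
Definition decomp2 (l : nat) (w : vecs l.+1) : vecs l :=
  [ffun sigma : {set 'I_l} => (w (wid sigma) - w (ord_max |: wid sigma)) / 2%:R].

Definition DeltaF (l : nat) (f : vecs l -> vecs l) (w : vecs l.+1) : vecs l.+1 :=
  Delta (f (decomp1 w)) + DeltaM (f (decomp2 w)).

(* simple affine root alpha_l of s_l (the l-th entry, position l-1) *)
Definition alpha_at (l : nat) : Xhat n := lab_root gam (nth None s l).

Fixpoint Pstage (l : nat) : vecs l -> vecs l :=
  match l return vecs l -> vecs l with
  | 0 => id
  | l'.+1 => fun w => cmul (alpha_at l') (DeltaF (@Pstage l') w)
  end.

Fixpoint Estage (l : nat) : seq (vecs l) :=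
  match l return seq (vecs l) with
  | 0 => [:: [ffun _ => 1]]
  | l'.+1 => map (@Delta l') (Estage l') ++ map (fun z => cmul (alpha_at l') (Delta z)) (Estage l')
  end.

Fixpoint Fstage (l : nat) : seq (vecs l) :=
  match l return seq (vecs l) with
  | 0 => [:: [ffun _ => 1]]
  | l'.+1 => map (@Delta l') (Fstage l') ++ map (fun z => cmulinv (alpha_at l') (Delta z)) (Fstage l')
  end.

(* X_T and Y_T as subsets (S_T-submodules) of (+)_{I} Q_T *)
Fixpoint Xstage (l : nat) : vecs l -> Prop :=
  match l return vecs l -> Prop with
  | 0 => fun v => exists p : ST T n, forall sigma, v sigma = tofrac p
  | l'.+1 => fun v => exists a b, [/\ Xstage a, Xstage b & v = Delta a + cmul (alpha_at l') (Delta b)]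
  end.

Fixpoint Ystage (l : nat) : vecs l -> Prop :=
  match l return vecs l -> Prop with
  | 0 => fun v => exists p : ST T n, forall sigma, v sigma = tofrac p
  | l'.+1 => fun v => exists a b, [/\ Ystage a, Ystage b & v = Delta a + cmulinv (alpha_at l') (Delta b)]
  end.

Definition P_s : vecs (size s) -> vecs (size s) := @Pstage (size s).
Definition E_s : seq (vecs (size s)) := Estage (size s).
Definition F_s : seq (vecs (size s)) := Fstage (size s).
Definition X_s : vecs (size s) -> Prop := @Xstage (size s).
Definition Y_s : vecs (size s) -> Prop := @Ystage (size s).

End Hecke.

From Pilot Require Import Defs.
From mathcomp Require Import all_boot all_algebra.
From mathcomp Require Import mpoly ring.
Set Implicit Arguments.
Unset Strict Implicit.
Unset Printing Implicit Defensive.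
Import GRing.Theory.
Local Open Scope ring_scope.

(* P(s) is diagonal: it multiplies the sigma-component by the product, over
   the prefixes of s, of the images of the simple affine roots under the
   corresponding truncations of ev(sigma).  Hence P(s) o Delta equals
   c^{alpha_l} o Delta o P(s') and P(s) o (c^{alpha_l})^{-1} o Delta equals
   Delta o P(s'), so P exchanges the two halves of the recursive definitions
   of E_T and F_T (and of X_T and Y_T); induction on the length of s. *)

Lemma natr_frac_mpoly_neq0 (T : idomainType) (k m : nat) :
  (m%:R : T) != 0 -> (m%:R : {fraction {mpoly T[k]}}) != 0.
Proof.
move=> m_neq0; rewrite -(rmorph_nat (@tofrac _)) tofrac_eq0.
apply: contraNneq m_neq0 => /(congr1 (meval (fun _ => 0))).
by rewrite mevalMn meval1 meval0 => ->; rewrite eqxx.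
Qed.

Lemma sym1_neq0 (T : idomainType) (n : nat) (w : 'rV[T]_(n + 1)) :
  w != 0 -> sym1 w != 0.
Proof.
apply: contra_neq => w0; apply/rowP => j.
have := congr1 (meval (fun i => (i == j)%:R)) w0.
rewrite meval0 /sym1 raddf_sum /= (bigD1 j) //= big1 ?addr0.
  by rewrite mevalZ mevalXU eqxx mulr1 mxE => ->.
by move=> i /negbTE neq_ij; rewrite mevalZ mevalXU neq_ij mulr0.
Qed.

Lemma lift_max (l : nat) (i : 'I_l) : lift ord_max i = widen_ord (leqnSn l) i.
Proof. by apply: val_inj; rewrite /= /bump leqNgt ltn_ord. Qed.

Lemma mem_wid (l : nat) (tau : {set 'I_l}) (i : 'I_l) :
  (widen_ord (leqnSn l) i \in wid tau) = (i \in tau).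
Proof. by rewrite /wid mem_imset // => x y /(congr1 val) /= /val_inj. Qed.

Lemma ord_max_notin_wid (l : nat) (tau : {set 'I_l}) : ord_max \notin wid tau.
Proof.
apply/imsetP => -[x _ /(congr1 val) /= x_eq].
by have := ltn_ord x; rewrite -x_eq ltnn.
Qed.

Lemma restrK (l : nat) (sigma : {set 'I_l.+1}) :
  ord_max \notin sigma -> wid (restr sigma) = sigma.
Proof.
move=> max_sigma; apply/setP => j; case: (unliftP ord_max j) => [i ->|->].
  by rewrite lift_max mem_wid inE.
by rewrite (negbTE max_sigma) (negbTE (ord_max_notin_wid _)).
Qed.

Lemma restrK_max (l : nat) (sigma : {set 'I_l.+1}) :
  ord_max \in sigma -> ord_max |: wid (restr sigma) = sigma.
Proof.
move=> max_sigma; apply/setP => j; case: (unliftP ord_max j) => [i ->|->].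
  rewrite lift_max !inE mem_wid inE orb_idl // => /eqP /(congr1 val) /= i_eq.
  by have := ltn_ord i; rewrite i_eq ltnn.
by rewrite max_sigma setU11.
Qed.

Section Diagonal.
Variables (n : nat) (R : seq 'rV[int]_n) (cor : 'rV[int]_n -> 'rV[int]_n).
Variables (Pi : seq 'rV[int]_n) (gam : 'rV[int]_n) (T : idomainType).
Variable s : seq (slabel Pi).
Hypothesis Pi_sub : forall i : 'I_(size Pi), Pi`_i \in R.
Hypothesis gam_root : gam \in R.
Hypothesis gam_coroot : pairing gam (cor gam) = 2.
Hypothesis rrefl_root : forall a b, a \in R -> b \in R -> Defs.rrefl cor a b \in R.
Hypothesis two_neq0 : (2%:R : T) != 0.
Hypothesis affine_root_neq0 : forall a, a \in R -> forall k : int, tens T (a, k) != 0.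

Local Notation ev := (@ev n cor Pi gam s).
Local Notation alpha := (@alpha_at n Pi gam s).
Local Notation P := (@Pstage n cor Pi gam T s _).
Local Notation cmul := (@cmul n cor Pi gam T s).
Local Notation cmulinv := (@cmulinv n cor Pi gam T s).
Local Notation E := (@Estage n cor Pi gam T s).
Local Notation F := (@Fstage n cor Pi gam T s).
Local Notation X := (@Xstage n cor Pi gam T s _).
Local Notation Y := (@Ystage n cor Pi gam T s _).

Lemma ev_root (l : nat) (sigma : {set 'I_l}) (lam : Xhat n) :
  lam.1 \in R -> (ev sigma lam).1 \in R.
Proof.
rewrite /Defs.ev; elim: (enum sigma) => //= i r IHr /IHr lam_root.
by case: (nth None s i) => [j|] /=; apply: rrefl_root.
Qed.

Lemma alpha_at_root (l : nat) : (alpha l).1 \in R.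
Proof.
rewrite /alpha_at; case: (nth None s l) => [j|] //=.
have -> : - gam = Defs.rrefl cor gam gam.
  by rewrite /Defs.rrefl gam_coroot -[2]/(1 + 1) scalerDl scale1r opprD addrA subrr add0r.
exact: rrefl_root.
Qed.

Lemma embQ_ev_alpha_neq0 (l : nat) (sigma : {set 'I_l}) (k : nat) :
  embQ T (ev sigma (alpha k)) != 0.
Proof.
rewrite /embQ tofrac_eq0; apply: sym1_neq0.
have := ev_root sigma (alpha_at_root k).
by case: (ev sigma (alpha k)) => a j /affine_root_neq0.
Qed.

Fixpoint Pweight (l : nat) : {set 'I_l} -> QT T n :=
  match l with
  | 0 => fun _ => 1
  | l'.+1 => fun sigma => embQ T (ev sigma (alpha l')) * Pweight (restr sigma)
  end.

Lemma PstageE (l : nat) (w : vecs n T l) : P w = [ffun sigma => Pweight sigma * w sigma].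
Proof.
elim: l w => [|l IHl] w; first by apply/ffunP => sigma; rewrite ffunE mul1r.
apply/ffunP => sigma /=; rewrite /DeltaF !IHl !ffunE.
have := natr_frac_mpoly_neq0 (n + 1) two_neq0.
have [max_sigma|max_sigma] := boolP (ord_max \in sigma).
  by rewrite (restrK_max max_sigma) => ?; field.
by rewrite (restrK max_sigma) => ?; field.
Qed.

Lemma Pstage_add (l : nat) (u v : vecs n T l) : P (u + v) = P u + P v.
Proof. by rewrite !PstageE; apply/ffunP => sigma; rewrite !ffunE mulrDr. Qed.

Lemma Pstage_Delta (l : nat) (z : vecs n T l) :
  P (Delta z) = cmul (alpha l) (Delta (P z)).
Proof. by rewrite !PstageE; apply/ffunP => sigma; rewrite !ffunE /= ?ffunE mulrA. Qed.

Lemma Pstage_cmulinv_Delta (l : nat) (z : vecs n T l) :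
  P (cmulinv (alpha l) (Delta z)) = Delta (P z).
Proof.
rewrite !PstageE; apply/ffunP => sigma; rewrite !ffunE /= ?ffunE.
by rewrite mulrAC mulVKf ?embQ_ev_alpha_neq0 // mulrC.
Qed.

Lemma Estage_perm_Pstage_Fstage (l : nat) :
  perm_eq (E l) (map P (F l)).
Proof.
elim: l => [|l IHl] //=.
rewrite map_cat -!map_comp (eq_map (@Pstage_Delta l)) (eq_map (@Pstage_cmulinv_Delta l)).
rewrite perm_catC; apply: perm_cat.
  by have := perm_map (fun z => cmul (alpha l) (Delta z)) IHl; rewrite -map_comp.
by have := perm_map (@Delta n T l) IHl; rewrite -map_comp.
Qed.

Lemma Xstage_Pstage_Ystage (l : nat) (v : vecs n T l) :
  X v <-> exists2 u, Y u & v = P u.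
Proof.
elim: l v => [|l IHl] v; first by split => [Xv|[u Yu ->]] //; exists v.
split.
  move=> [a [b [/IHl [a' Ya' ->] /IHl [b' Yb' ->] ->]]].
  exists (Delta b' + cmulinv (alpha l) (Delta a')); first by exists b', a'.
  by rewrite Pstage_add Pstage_Delta Pstage_cmulinv_Delta addrC.
move=> [_ [a [b [Ya Yb ->]]] ->].
exists (P b), (P a); split; try by apply/IHl; exists b.
  by apply/IHl; exists a.
by rewrite Pstage_add Pstage_Delta Pstage_cmulinv_Delta addrC.
Qed.

End Diagonal.

Theorem lemma6p13 (n : nat) (R : seq 'rV[int]_n) (cor : 'rV[int]_n -> 'rV[int]_n)
  (Pi : seq 'rV[int]_n) (gam : 'rV[int]_n) (T : idomainType) :
  reduced_irreducible_root_system R cor ->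
  is_base R Pi ->
  highest_root R Pi gam ->
  (2%:R : T) != 0 ->
  (* the affine roots alpha + k delta (alpha in R, k in Z) are nonzero in X^ (x) T *)
  (forall a, a \in R -> forall k : int, tens T (a, k) != 0) ->
  forall s : seq (slabel Pi),
    @E_s n cor Pi gam T s =i map (@P_s n cor Pi gam T s) (@F_s n cor Pi gam T s) /\
    (forall v, @X_s n cor Pi gam T s v <-> exists2 u, @Y_s n cor Pi gam T s u & v = @P_s n cor Pi gam T s u).
Proof.
move=> [[_ _ coroot2 rrefl_root _] _ _] [_ Pi_sub _ _] [[gam_root _] _] two_neq0 hne s.
have Pi_nth (i : 'I_(size Pi)) : Pi`_i \in R by apply: Pi_sub; apply: mem_nth.
have gam_coroot := coroot2 _ gam_root.
split.
  exact/perm_mem/(Estage_perm_Pstage_Fstage s Pi_nth gam_root gam_coroot rrefl_root).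
exact: (Xstage_Pstage_Ystage s Pi_nth gam_root gam_coroot rrefl_root).
Qed.
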